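(* Fix a real parameter $k$. Let $G$ be a topology that is weakly consistent (with respect to $k$) and physically connected. Then $G$ is weakly connected, i.e., for any two nodes $u,v$ of $G$ there is a directed path from $u$ to $v$ consisting only of links that are active or unclassified.
   Context: A topology is a finite directed graph $G=(V,E)$ whose links $e\in E$ carry a real weight $w(e)$ and a state $s(e)\in\{\mathrm{active},\mathrm{inactive},\mathrm{unclassified}\}$; a link is classified if it is active or inactive. A path is a finite sequence of links in which the target of each link is the source of the next. $G$ is physically connected if between any two nodes there is a directed path of links in arbitrary state. $G$ is structurally consistent if it has no loops and no parallel links (two distinct links with the same source and target). For a link $ab$ from $a$ to $b$, a triangle for $ab$ is a node $c\notin\{a,b\}$ with classified links $ac$ and $cb$ such that $w(ab)>\max(w(ac),w(cb))$ and $w(ab)\ge k\cdot\min(w(ac),w(cb))$. Inactive-link constraint: every inactive link has a triangle. Active-link constraint: no active link has a triangle. $G$ is weakly consistent if it is structurally consistent and fulfills both the active-link and inactive-link constraints. *)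

From HB Require Import structures.
From mathcomp Require Import all_boot all_order all_algebra.
From mathcomp Require Import reals.
Set Implicit Arguments. Unset Strict Implicit. Unset Printing Implicit Defensive.
Import Order.TTheory GRing.Theory Num.Theory.
Local Open Scope ring_scope.

Inductive state := Active | Inactive | Unclassified.

Definition classified (s : state) : Prop := s = Active \/ s = Inactive.

(* A topology: finite node set V, finite link set E (links are first-class,
   so parallel links and loops are representable), source/target maps,
   real weights and states. *)
Record topology (R : realType) := Topology {
  node : finType;
  link : finType;
  src : link -> node;
  tgt : link -> node;
  weight : link -> R;
  lstate : link -> state }.

Section Defs.
Variable R : realType.
Variable G : topology R.

Fixpoint walk (u v : node G) (p : seq (link G)) : Prop :=
  match p with
  | [::] => u = v
  | e :: p' => src e = u /\ walk (tgt e) v p'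
  end.

Definition physically_connected : Prop :=
  forall u v : node G, exists p, walk u v p.

Definition weakly_connected : Prop :=
  forall u v : node G, exists p, walk u v p /\
    (forall e, e \in p -> lstate e = Active \/ lstate e = Unclassified).

Definition structurally_consistent : Prop :=
  (forall e : link G, src e <> tgt e) /\
  (forall e f : link G, e <> f -> src e = src f -> tgt e = tgt f -> False).

Definition has_triangle (k : R) (ab : link G) : Prop :=
  exists (c : node G) (ac cb : link G),
    c <> src ab /\ c <> tgt ab /\
    src ac = src ab /\ tgt ac = c /\ src cb = c /\ tgt cb = tgt ab /\
    classified (lstate ac) /\ classified (lstate cb) /\
    Num.max (weight ac) (weight cb) < weight ab /\
    k * Num.min (weight ac) (weight cb) <= weight ab.

Definition inactive_link_constraint (k : R) : Prop :=
  forall e : link G, lstate e = Inactive -> has_triangle k e.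

Definition active_link_constraint (k : R) : Prop :=
  forall e : link G, lstate e = Active -> ~ has_triangle k e.

Definition weakly_consistent (k : R) : Prop :=
  structurally_consistent /\ active_link_constraint k /\ inactive_link_constraint k.
End Defs.

(* An inactive link ab has a triangle whose two links ac, cb are strictly
   lighter than ab.  By well-founded induction on the weight, every link can
   therefore be replaced by a path of active or unclassified links between its
   endpoints; doing so link by link turns a physical path into a weak one. *)
From mathcomp Require Import all_boot all_order all_algebra.
From mathcomp Require Import reals.
Import Order.TTheory GRing.Theory Num.Theory.
Set Implicit Arguments. Unset Strict Implicit.
Local Open Scope ring_scope.

Section WeakWalks.
Variable R : realType.
Variable G : topology R.

Lemma walk_cat (u v w : node G) (p q : seq (link G)) :
  walk u v p -> walk v w q -> walk u w (p ++ q).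
Proof.
elim: p u => [|e p IHp] u /=; first by move=> ->.
by move=> [src_e walk_p] walk_q; split => //; apply: IHp.
Qed.

Definition weak_walk (u v : node G) (p : seq (link G)) : Prop :=
  walk u v p /\ forall e, e \in p -> lstate e = Active \/ lstate e = Unclassified.

Lemma weak_walk_cat (u v w : node G) (p q : seq (link G)) :
  weak_walk u v p -> weak_walk v w q -> weak_walk u w (p ++ q).
Proof.
move=> [walk_p weak_p] [walk_q weak_q]; split; first exact: walk_cat walk_q.
by move=> e; rewrite mem_cat => /orP[/weak_p | /weak_q].
Qed.

Lemma weak_walk_link (e : link G) :
  lstate e <> Inactive -> weak_walk (src e) (tgt e) [:: e].
Proof.
move=> not_inactive; split => //= f; rewrite inE => /eqP ->.
by case: (lstate e) not_inactive; [left | | right].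
Qed.

Definition lighter_links (e : link G) : {pred link G} :=
  [pred f | weight f < weight e].

Lemma card_lighter_links_lt (e f : link G) :
  weight f < weight e -> (#|lighter_links f| < #|lighter_links e|)%N.
Proof.
move=> lt_fe; apply/proper_card/properP; split.
  by apply/subsetP => x; rewrite !inE => /lt_trans; apply.
by exists f; rewrite !inE ?lt_fe ?ltxx.
Qed.

Lemma link_weak_bypass (k : R) : inactive_link_constraint G k ->
  forall e : link G, exists p, weak_walk (src e) (tgt e) p.
Proof.
move=> inactive_triangle e; have [n] := ubnP #|lighter_links e|.
elim: n e => // n IHn e /ltnSE lighter_e.
case state_e: (lstate e);
  try by exists [:: e]; apply: weak_walk_link; rewrite state_e.
have [c [ac [cb [_ [_ [src_ac [tgt_ac [src_cb [tgt_cb [_ [_ [heavy _]]]]]]]]]]]]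
  := inactive_triangle e state_e.
have [lt_ac lt_cb] : weight ac < weight e /\ weight cb < weight e.
  by move: heavy; rewrite gt_max => /andP[].
have [p weak_p] := IHn ac (leq_trans (card_lighter_links_lt lt_ac) lighter_e).
have [q weak_q] := IHn cb (leq_trans (card_lighter_links_lt lt_cb) lighter_e).
exists (p ++ q); rewrite -src_ac -tgt_cb.
by apply: weak_walk_cat weak_p _; rewrite tgt_ac -src_cb.
Qed.

Lemma walk_weakened (u v : node G) (p : seq (link G)) :
  (forall e : link G, exists q, weak_walk (src e) (tgt e) q) ->
  walk u v p -> exists q, weak_walk u v q.
Proof.
move=> bypass; elim: p u => [|e p IHp] u /=; first by move=> ->; exists [::].
move=> [<- walk_p]; have [q weak_q] := bypass e; have [r weak_r] := IHp _ walk_p.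
by exists (q ++ r); apply: weak_walk_cat weak_r.
Qed.

End WeakWalks.

Theorem theorem3 (R : realType) (k : R) (G : topology R) :
  weakly_consistent G k -> physically_connected G -> weakly_connected G.
Proof.
move=> [_ [_ inactive_triangle]] connected u v.
have [p walk_p] := connected u v.
exact: walk_weakened (link_weak_bypass inactive_triangle) walk_p.
Qed.
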